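(* For every graph $G$, $\mu\text{-}tw(G)=\alpha\text{-}tw(L^2(G))$.
   Context: All graphs are finite and simple. $L^2(G)$ is the graph with vertex set $E(G)$ in which two distinct edges $e,f$ of $G$ are adjacent iff their distance in the line graph $L(G)$ is at most $2$, equivalently iff $G[e\cup f]$ is connected (they share a vertex, or some edge of $G$ meets both). A tree decomposition of a graph $G$ is a tree $T$ with bags $B_t\subseteq V(G)$ such that the nodes containing any given vertex induce a connected subtree and every edge lies in some bag. An induced matching is a set $M$ of pairwise disjoint edges such that the subgraph induced by their endpoints has exactly the edges of $M$. For $S\subseteq V(G)$: $\mu_G(S)$ is the maximum size of an induced matching of $G$ all of whose edges intersect $S$; $\alpha_G(S)$ is the maximum size of an independent set of $G$ contained in $S$. For $\lambda\in\{\mu,\alpha\}$, $\lambda_G(\mathcal{T})=\max_t\lambda_G(B_t)$ and $\lambda\text{-}tw(G)$ is its minimum over all tree decompositions $\mathcal{T}$ of $G$. *)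

From mathcomp Require Import all_boot.
From Stdlib Require Import ClassicalEpsilon.
Set Implicit Arguments. Unset Strict Implicit. Unset Printing Implicit Defensive.

(* A finite simple graph is a vertex type V : finType with an adjacency
   relation adj : rel V that is symmetric and irreflexive (hypotheses of the
   theorem). *)

Section Graphs.
Variable V : finType.
Variable adj : rel V.

Definition is_edge (A : {set V}) : bool :=
  [exists x, exists y, adj x y && (A == [set x; y])].

Definition edge_type := {A : {set V} | is_edge A}.

Definition independent (S : {set V}) : bool :=
  [forall x in S, forall y in S, ~~ adj x y].

Definition alpha (S : {set V}) : nat :=
  \max_(I : {set V} | independent I && (I \subset S)) #|I|.

Definition induced_matching (M : {set {set V}}) : bool :=
  [forall A in M, is_edge A] &&
  [forall A in M, forall B in M, (A != B) ==> [disjoint A & B]] &&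
  [forall x, forall y, ((x \in cover M) && (y \in cover M) && adj x y)
                         ==> ([set x; y] \in M)].

Definition mu (S : {set V}) : nat :=
  \max_(M : {set {set V}} | induced_matching M &&
          [forall A in M, ~~ [disjoint A & S]]) #|M|.

End Graphs.

Definition L2adj (V : finType) (adj : rel V) : rel (edge_type adj) :=
  fun e f =>
    (e != f) &&
    (~~ [disjoint val e & val f] ||
     [exists g : edge_type adj,
        ~~ [disjoint val g & val e] && ~~ [disjoint val g & val f]]).

Arguments L2adj {V} adj _ _.

Definition is_tree (I : finType) (tE : rel I) : Prop :=
  [/\ #|I| > 0, symmetric tE, irreflexive tE,
      (forall x y, connect tE x y) &
      (forall x p, path tE x p -> uniq (x :: p) -> 2 <= size p ->
                   ~~ tE (last x p) x)].

Definition is_tree_decomposition (V : finType) (adj : rel V)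
  (I : finType) (tE : rel I) (B : I -> {set V}) : Prop :=
  [/\ is_tree tE,
      (forall v, exists t, v \in B t),
      (forall x y, adj x y -> exists t, (x \in B t) && (y \in B t)) &
      (forall v t1 t2, v \in B t1 -> v \in B t2 ->
         connect [rel a b | [&& tE a b, v \in B a & v \in B b]] t1 t2)].

Definition has_width_at_most (V : finType) (adj : rel V)
  (lam : {set V} -> nat) (k : nat) : Prop :=
  exists (I : finType) (tE : rel I) (B : I -> {set V}),
    is_tree_decomposition adj tE B /\ forall t, lam (B t) <= k.

Lemma has_width_exists (V : finType) (adj : rel V) (lam : {set V} -> nat) :
  exists k, has_width_at_most adj lam k.
Proof.
exists (lam setT), unit, [rel _ _ | false], (fun _ => setT).
split; last by [].
split.
- split.
  + by rewrite card_unit.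
  + by move=> ? ?.
  + by move=> ?.
  + by move=> [] []; exact: connect0.
  + by move=> x [|a [|b p]].
- by move=> v; exists tt; rewrite inE.
- by move=> x y _; exists tt; rewrite !inE.
- by move=> v [] [] _ _; exact: connect0.
Qed.

(* is_min_width adj lam k <-> k is the least width of a tree decomposition;
   such a k exists (has_width_exists + well-ordering of nat). *)
Definition is_min_width (V : finType) (adj : rel V) (lam : {set V} -> nat)
  (k : nat) : Prop :=
  has_width_at_most adj lam k /\ forall j, has_width_at_most adj lam j -> k <= j.

Definition lam_tw (V : finType) (adj : rel V) (lam : {set V} -> nat) : nat :=
  epsilon (inhabits 0) (is_min_width adj lam).

Definition mu_tw (V : finType) (adj : rel V) : nat := lam_tw adj (mu adj).
Definition alpha_tw (V : finType) (adj : rel V) : nat := lam_tw adj (alpha adj).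

From mathcomp Require Import all_boot.
From Stdlib Require Import ClassicalEpsilon Wf_nat.
Set Implicit Arguments. Unset Strict Implicit. Unset Printing Implicit Defensive.

(* A set of edges is independent in L^2(G) exactly when it is an induced
   matching of G, so mu_G(S) is alpha_{L^2(G)} of the set of edges meeting S.
   Replacing every bag of a tree decomposition of G by the edges meeting it
   therefore gives a decomposition of L^2(G) of the same width.  Conversely,
   replace every bag of a decomposition of L^2(G) by the vertices all of whose
   edges lie in it: the edges at a vertex, or at the two ends of an edge, form
   a clique of L^2(G), hence lie in a common bag by the Helly property of
   subtrees of a tree; and every edge meeting the new bag is in the old one. *)

Lemma not_disjointP (T : finType) (A B : {set T}) :
  reflect (exists2 x, x \in A & x \in B) (~~ [disjoint A & B]).
Proof.
rewrite -setI_eq0; apply: (iffP (set0Pn _)) => [[x]|[x xA xB]].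
  by rewrite inE => /andP[]; exists x.
by exists x; rewrite inE xA.
Qed.

Section Subtrees.
Variables (I : finType) (tE : rel I).
Hypothesis tree_tE : is_tree tE.
Implicit Types A B C P Q R : pred I.

Definition induced_rel P : rel I := [rel a b | [&& tE a b, P a & P b]].

Definition subtree P : Prop :=
  forall u v, P u -> P v -> connect (induced_rel P) u v.

Lemma induced_path P x p :
  P x -> path (induced_rel P) x p = path tE x p && all P p.
Proof.
elim: p x => [|y p IH] x Px //=; rewrite {1}/induced_rel /= Px.
by case Py: (P y); rewrite ?andbF //= andbT IH // andbA.
Qed.

Lemma connect_induced_path P x p :
  path tE x p -> all P (x :: p) -> connect (induced_rel P) x (last x p).
Proof.
by move=> xp /andP[Px Pp]; apply/connectP; exists p; rewrite ?induced_path ?xp.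
Qed.

Lemma tree_uniq_path x y :
  exists p, [/\ path tE x p, uniq (x :: p) & last x p = y].
Proof.
case: tree_tE => _ _ _ tE_connected _.
case/connectP: (tE_connected x y) => p xp ->.
by case/shortenP: xp => q xq uq _; exists q.
Qed.

(* A tree edge [x a] cannot be bypassed: otherwise a shortest path from [x]
   to [a] avoiding it would close a cycle. *)
Lemma tree_edge_cut P Q x a t : tE x a -> ~~ P a -> ~~ Q x ->
  connect (induced_rel P) x t -> connect (induced_rel Q) a t -> False.
Proof.
case: tree_tE => _ tE_sym tE_irr _ tE_acyclic xa Pa Qx x_t a_t.
pose cut := [rel u v | [&& tE u v, (u, v) != (x, a) & (u, v) != (a, x)]].
have cut_sym : symmetric cut.
  move=> u v; rewrite /= tE_sym !xpair_eqE.
  by case: (u == x); case: (u == a); case: (v == x); case: (v == a).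
have induced_cut R : ~~ R a \/ ~~ R x -> subrel (induced_rel R) cut.
  move=> Rxa u v /and3P[uv Ru Rv]; rewrite /= uv !xpair_eqE.
  by case: Rxa => /negbTE R0; apply/and3P; split=> //;
    apply/negP => /andP[/eqP eu /eqP ev]; rewrite -?eu -?ev ?Ru ?Rv in R0.
have x_cut_t : connect cut x t.
  by apply: connect_sub x_t => u v /(induced_cut P (or_introl Pa))/connect1.
have a_cut_t : connect cut a t.
  by apply: connect_sub a_t => u v /(induced_cut Q (or_intror Qx))/connect1.
have : connect cut x a by rewrite (connect_trans x_cut_t) // (sym_connect_sym cut_sym).
case/connectP => p xp a_last; case/shortenP: xp a_last => [[|b [|c s]]] xs us _ a_last.
- by rewrite a_last tE_irr in xa.
- by rewrite /= in a_last; move: xs; rewrite -a_last /= xpair_eqE !eqxx andbF.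
- have xs' : path tE x [:: b, c & s] by apply: sub_path xs => u v /andP[].
  by move: (tE_acyclic x _ xs' us isT); rewrite -a_last tE_sym xa.
Qed.

Lemma subtree_path P x p : subtree P -> path tE x p -> uniq (x :: p) ->
  P x -> P (last x p) -> all P (x :: p).
Proof.
move=> P_sub; elim: p x => [|a p IH] x /=; first by move=> _ _ ->.
move=> /andP[xa ap] /andP[x_ap ap_uniq] Px Plast.
have Pa : P a.
  apply/negPn/negP => Pa; apply: (tree_edge_cut (Q := mem (a :: p)) xa Pa x_ap).
    exact: P_sub Plast.
  by apply: connect_induced_path => //; apply/allP.
by rewrite Px; exact: IH.
Qed.

Lemma subtree_of_paths P :
  (forall x p, path tE x p -> uniq (x :: p) -> P x -> P (last x p) -> all P p) ->
  subtree P.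
Proof.
move=> P_paths u v Pu Pv; have [p [up p_uniq p_last]] := tree_uniq_path u v.
rewrite -p_last in Pv *.
by apply: connect_induced_path; rewrite //= Pu (P_paths u).
Qed.

Lemma connect_induced_sub P Q :
  subpred P Q -> subrel (connect (induced_rel P)) (connect (induced_rel Q)).
Proof.
move=> PQ; apply: connect_sub => a b /and3P[ab Pa Pb].
by apply: connect1; rewrite /induced_rel /= ab !PQ.
Qed.

Lemma eq_subtree P Q : P =1 Q -> subtree P -> subtree Q.
Proof.
move=> eqPQ P_sub u v; rewrite -!eqPQ => Pu Pv.
by apply: connect_induced_sub (P_sub _ _ Pu Pv) => x; rewrite eqPQ.
Qed.

Lemma subtreeI P Q : subtree P -> subtree Q -> subtree (predI P Q).
Proof.
move=> P_sub Q_sub; apply: subtree_of_paths => x p xp p_uniq /andP[Px Qx] /andP[Pl Ql].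
have /andP[_ /allP Pp] := subtree_path P_sub xp p_uniq Px Pl.
have /andP[_ /allP Qp] := subtree_path Q_sub xp p_uniq Qx Ql.
by apply/allP => y yp; rewrite /= Pp ?Qp.
Qed.

Lemma subtreeU P Q t : subtree P -> subtree Q -> P t -> Q t -> subtree (predU P Q).
Proof.
move=> P_sub Q_sub Pt Qt u v /= PQu PQv; apply: (@connect_trans _ _ t).
  case/orP: PQu => [Pu | Qu]; [apply: connect_induced_sub (P_sub _ _ Pu Pt)
                              | apply: connect_induced_sub (Q_sub _ _ Qu Qt)];
    by move=> x /= ->; rewrite ?orbT.
case/orP: PQv => [Pv | Qv]; [apply: connect_induced_sub (P_sub _ _ Pt Pv)
                            | apply: connect_induced_sub (Q_sub _ _ Qt Qv)];
  by move=> x /= ->; rewrite ?orbT.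
Qed.

(* Walking from C to B, a step leaving C before reaching B would be a tree
   edge bypassed through a common point of B and C. *)
Lemma path_meets_inter B C x p : subtree B -> subtree C -> (exists t, B t && C t) ->
  path tE x p -> all (predU C B) (x :: p) -> C x -> B (last x p) ->
  has (predI B C) (x :: p).
Proof.
move=> B_sub C_sub [t /andP[Bt Ct]]; elim: p x => [|u p IH] x /=.
  by move=> _ _ Cx Bx; rewrite Bx Cx.
move=> /andP[xu up] /andP[_ CBp] Cx Bl.
case Bx: (B x); first by rewrite Cx.
case Cu: (C u); first by move: (IH u up CBp Cu Bl); rewrite /= Cu.
have Bu : B u by move: CBp => /= /andP[]; rewrite Cu.
exfalso; apply: (tree_edge_cut (P := C) (Q := B) (t := t) xu); rewrite ?Cu ?Bx //.
  exact: C_sub Ct.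
exact: B_sub Bt.
Qed.

Lemma subtree_helly3 A B C : subtree A -> subtree B -> subtree C ->
  (exists t, A t && B t) -> (exists t, A t && C t) -> (exists t, B t && C t) ->
  exists t, [&& A t, B t & C t].
Proof.
move=> A_sub B_sub C_sub [c /andP[Ac Bc]] [b /andP[Ab Cb]] BC.
have [a /andP[Ba Ca]] := BC.
have [p [bp p_uniq p_last]] := tree_uniq_path b c.
rewrite -p_last in Ac Bc.
have /allP Ap := subtree_path A_sub bp p_uniq Ab Ac.
have CBp : all (predU C B) (b :: p).
  apply: subtree_path (subtreeU C_sub B_sub Ca Ba) bp p_uniq _ _;
  by rewrite /= ?Cb ?Bc ?orbT.
have /hasP[t tp /andP[Bt Ct]] := path_meets_inter B_sub C_sub BC bp CBp Cb Bc.
by exists t; rewrite Ap // Bt Ct.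
Qed.

Lemma subtree_helly (W : eqType) (F : W -> pred I) (s : seq W) :
  {in s, forall w, subtree (F w)} ->
  {in s &, forall w w', exists t, F w t && F w' t} ->
  exists t, all (fun w => F w t) s.
Proof.
elim: s F => [|w s IH] F F_sub F_meet.
  by case: tree_tE => /card_gt0P[t _] _ _ _ _; exists t.
have in_tail w' : w' \in s -> w' \in w :: s by move=> w's; rewrite inE w's orbT.
have w_in := mem_head w s.
case: s IH in_tail w_in F_sub F_meet => [|w1 s] IH in_tail w_in F_sub F_meet.
  by have [t /andP[Ft _]] := F_meet w w w_in w_in; exists t; rewrite /= Ft.
have [t] : exists t, all (fun w' => F w t && F w' t) (w1 :: s).
  apply: IH => [w' w's | w' w'' w's w''s].
    exact: subtreeI (F_sub _ w_in) (F_sub _ (in_tail _ w's)).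
  move: (in_tail _ w's) (in_tail _ w''s) => w'_in w''_in.
  have [t /and3P[Fw Fw' Fw'']] := subtree_helly3 (F_sub _ w_in) (F_sub _ w'_in)
    (F_sub _ w''_in) (F_meet _ _ w_in w'_in) (F_meet _ _ w_in w''_in)
    (F_meet _ _ w'_in w''_in).
  by exists t; rewrite Fw Fw' Fw''.
move=> /= /andP[/andP[Fw Fw1] Fs]; exists t; rewrite /= Fw Fw1 /=.
by apply/allP => w' w's; have /andP[] := allP Fs w' w's.
Qed.

End Subtrees.

Lemma decomposition_clique (W : finType) (adjW : rel W) (I : finType) (tE : rel I)
    (B : I -> {set W}) : is_tree_decomposition adjW tE B ->
  forall s : seq W, {in s &, forall x y, x != y -> adjW x y} ->
  exists t, {subset s <= B t}.
Proof.
case=> tree covered edge_covered connected s clique.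
have [x _ | x y xs ys | t /allP st] :=
  subtree_helly tree (F := fun x t => x \in B t) (s := s).
- by move=> u v; apply: connected.
- have [<-|xy] := eqVneq x y; first by have [t xt] := covered x; exists t; rewrite xt.
  exact: edge_covered (clique _ _ xs ys xy).
- by exists t.
Qed.

Lemma independentP (T : finType) (r : rel T) (S : {set T}) :
  reflect {in S &, forall x y, ~~ r x y} (independent r S).
Proof.
apply: (iffP forall_inP) => [rS x y xS yS | rS x xS].
  exact: (forall_inP (rS x xS)).
by apply/forall_inP => y yS; apply: rS.
Qed.

Lemma alpha_subset (T : finType) (r : rel T) (S1 S2 : {set T}) :
  S1 \subset S2 -> alpha r S1 <= alpha r S2.
Proof.
move=> S12; apply/bigmax_leqP => J /andP[indJ JS1]; apply: leq_bigmax_cond.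
by rewrite indJ (subset_trans JS1).
Qed.

Lemma induced_matchingP (T : finType) (r : rel T) (M : {set {set T}}) :
  reflect [/\ {in M, forall A, is_edge r A},
              {in M &, forall A B : {set T}, A != B -> [disjoint A & B]} &
              forall x y, x \in cover M -> y \in cover M -> r x y -> [set x; y] \in M]
          (induced_matching r M).
Proof.
rewrite /induced_matching -andbA.
apply: (iffP and3P) => [[/forall_inP edges /forall_inP disj /forallP ind] |
                        [edges disj ind]].
  split=> // [A B AM BM | x y xM yM xy].
    exact/implyP/(forall_inP (disj A AM)).
  by apply: (implyP (forallP (ind x) y)); rewrite xM yM.
split.
- by apply/forall_inP.
- by apply/forall_inP => A AM; apply/forall_inP => B BM; apply/implyP; apply: disj.
- apply/forallP => x; apply/forallP => y; apply/implyP.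
  by move=> /andP[/andP[xM yM] xy]; apply: ind.
Qed.

Section SquareLineGraph.
Variables (V : finType) (adj : rel V).
Hypotheses (adj_sym : symmetric adj) (adj_irr : irreflexive adj).

Local Notation E := (edge_type adj).
Local Notation L2 := (L2adj adj).

Lemma edgeP (A : {set V}) : is_edge adj A ->
  exists x y, [/\ adj x y, x != y & A = [set x; y]].
Proof.
case/existsP => x /existsP[y /andP[xy /eqP ->]]; exists x, y; split => //.
by apply: contraTneq xy => ->; rewrite adj_irr.
Qed.

Lemma edge_eq_pair (A : {set V}) x y : is_edge adj A ->
  x \in A -> y \in A -> x != y -> A = [set x; y].
Proof.
case/edgeP => a [b [_ ab ->]] xA yA xy; apply/eqP; rewrite eq_sym eqEcard.
by rewrite !cards2 ab xy andbT; apply/subsetP => z /set2P[] ->.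
Qed.

Lemma edge_adj (A : {set V}) x y : is_edge adj A ->
  x \in A -> y \in A -> x != y -> adj x y.
Proof.
case/edgeP => a [b [ab _ ->]]; rewrite !inE.
by case/orP => /eqP-> /orP[] /eqP->; rewrite ?eqxx // adj_sym.
Qed.

Lemma is_edge_pair x y : adj x y -> is_edge adj [set x; y].
Proof. by move=> xy; apply/existsP; exists x; apply/existsP; exists y; rewrite xy eqxx. Qed.

Definition edge_of x y (xy : adj x y) : E := exist _ [set x; y] (is_edge_pair xy).

Lemma L2adjP (e f : E) :
  reflect (e != f /\ exists x y, [/\ x \in val e, y \in val f & (x == y) || adj x y])
          (L2 e f).
Proof.
apply: (iffP andP) => -[ef meet]; split=> //.
  case/orP: meet => [/not_disjointP[x xe xf] | /existsP[g /andP]].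
    by exists x, x; rewrite eqxx.
  case=> /not_disjointP[x xg xe] /not_disjointP[y yg yf]; exists x, y; split=> //.
  by have [// | xy] := eqVneq x y; rewrite (edge_adj (valP g)).
case: meet => x [y [xe yf /orP[/eqP xy | xy]]].
  by apply/orP; left; apply/not_disjointP; exists x; rewrite // xy.
apply/orP; right; apply/existsP; exists (edge_of xy).
apply/andP; split; apply/not_disjointP; [exists x | exists y];
  by rewrite //= !inE eqxx ?orbT.
Qed.

Lemma independent_L2 (J : {set E}) :
  independent L2 J = induced_matching adj (val @: J).
Proof.
apply/independentP/induced_matchingP => [indJ | [_ disj ind] e f eJ fJ].
  have close_eq e f x y : e \in J -> f \in J -> x \in val e -> y \in val f ->
      (x == y) || adj x y -> e = f.
    move=> eJ fJ xe yf xy; apply/eqP/negPn/negP => ef.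
    by move/negP: (indJ e f eJ fJ); apply; apply/L2adjP; split=> //; exists x, y.
  split=> [_ /imsetP[e _ ->] | _ _ /imsetP[e eJ ->] /imsetP[f fJ ->] ef | x y].
  - exact: valP.
  - apply/negPn/negP => /not_disjointP[x xe xf].
    by rewrite (close_eq e f x x) ?eqxx in ef.
  - move=> /bigcupP[_ /imsetP[e eJ ->] xe] /bigcupP[_ /imsetP[f fJ ->] yf] xy.
    have xy' : x != y by apply: contraTneq xy => ->; rewrite adj_irr.
    have ef : e = f by apply: close_eq xe yf _; rewrite // xy orbT.
    subst f.
    by rewrite -(edge_eq_pair (valP e) xe yf xy'); apply: imset_f.
have meet_eq A B : A \in val @: J -> B \in val @: J -> ~~ [disjoint A & B] -> A = B.
  by move=> AJ BJ AB; apply/eqP; apply: contraNT AB; apply: disj.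
have [eJ' fJ'] := (imset_f val eJ, imset_f val fJ).
apply/L2adjP => -[ef [x [y [xe yf /orP[/eqP xy | xy]]]]]; apply: (negP ef);
  rewrite -(inj_eq val_inj); apply/eqP.
  by apply: meet_eq => //; apply/not_disjointP; exists x; rewrite // xy.
have xyJ : [set x; y] \in val @: J.
  by apply: ind xy; apply/bigcupP; [exists (val e) | exists (val f)].
have xy_e : [set x; y] = val e.
  by apply: meet_eq => //; apply/not_disjointP; exists x; rewrite // !inE eqxx.
have xy_f : [set x; y] = val f.
  by apply: meet_eq => //; apply/not_disjointP; exists y; rewrite // !inE eqxx orbT.
by rewrite -xy_e -xy_f.
Qed.

Definition edges_meeting (S : {set V}) : {set E} :=
  [set e : E | ~~ [disjoint val e & S]].

Lemma alpha_edges_meeting (S : {set V}) : alpha L2 (edges_meeting S) = mu adj S.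
Proof.
apply/eqP; rewrite eqn_leq; apply/andP; split.
  apply/bigmax_leqP => J /andP[indJ JS]; rewrite -(card_imset J val_inj).
  apply: leq_bigmax_cond; rewrite -independent_L2 indJ /=.
  by apply/forall_inP => _ /imsetP[e eJ ->]; move/subsetP: JS => /(_ e eJ); rewrite inE.
apply/bigmax_leqP => M /andP[matchM /forall_inP MS].
have [edgesM _ _] := induced_matchingP _ _ matchM.
have val_M : val @: [set e : E | val e \in M] = M.
  apply/setP => A; apply/imsetP/idP => [[e] | AM]; first by rewrite inE => ? ->.
  by exists (exist _ A (edgesM A AM)); rewrite ?inE.
rewrite -{1}val_M (card_imset _ val_inj); apply: leq_bigmax_cond.
rewrite independent_L2 val_M matchM /=.
by apply/subsetP => e; rewrite !inE; apply: MS.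
Qed.

Definition star_in (F : {set E}) : {set V} :=
  [set v | [forall e : E, (v \in val e) ==> (e \in F)]].

Lemma star_inP (F : {set E}) v :
  reflect (forall e : E, v \in val e -> e \in F) (v \in star_in F).
Proof. by rewrite inE; apply: (iffP forallP) => vF e; apply/implyP/vF. Qed.

Lemma edges_meeting_star_in (F : {set E}) : edges_meeting (star_in F) \subset F.
Proof. by apply/subsetP => e; rewrite inE => /not_disjointP[v ve /star_inP]; apply. Qed.

Lemma L2_decomposition (I : finType) (tE : rel I) (B : I -> {set V}) :
  is_tree_decomposition adj tE B ->
  is_tree_decomposition L2 tE (fun t => edges_meeting (B t)).
Proof.
case=> tree covered edge_covered connected; split=> // [e | e f | e].
- have [x [y [_ _ e_xy]]] := edgeP (valP e); have [t xt] := covered x.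
  by exists t; rewrite inE; apply/not_disjointP; exists x; rewrite // e_xy !inE eqxx.
- case/L2adjP => _ [x [y [xe yf xy]]].
  have [t /andP[xt yt]] : exists t, (x \in B t) && (y \in B t).
    case/orP: xy => [/eqP <- | xy]; last exact: edge_covered.
    by have [t xt] := covered x; exists t; rewrite xt.
  exists t; rewrite !inE; apply/andP; split; apply/not_disjointP;
    by [exists x | exists y].
- have [x [y [xy _ e_xy]]] := edgeP (valP e).
  have [s /andP[xs ys]] := edge_covered x y xy.
  suff : subtree tE (fun t => e \in edges_meeting (B t)) by [].
  have := subtreeU (P := fun t => x \in B t) (Q := fun t => y \in B t)
    (connected x) (connected y) xs ys.
  apply: eq_subtree => t.
  rewrite /= inE e_xy; apply/orP/not_disjointP => [[xt | yt] | [z /set2P[] -> zt]].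
  + by exists x; rewrite ?inE ?eqxx.
  + by exists y; rewrite ?inE ?eqxx ?orbT.
  + by left.
  + by right.
Qed.

Lemma decomposition_of_L2 (I : finType) (tE : rel I) (B : I -> {set E}) :
  is_tree_decomposition L2 tE B ->
  is_tree_decomposition adj tE (fun t => star_in (B t)).
Proof.
move=> td; have [tree _ _ connected] := td; split=> // [v | x y xy | v].
- have [e f|t st] := decomposition_clique td (s := enum [set e : E | v \in val e]).
    rewrite !mem_enum !inE => ve vf ef.
    by apply/L2adjP; split=> //; exists v, v; rewrite eqxx.
  by exists t; apply/star_inP => e ve; apply: st; rewrite mem_enum inE.
- pose xy_edges := [set e : E | (x \in val e) || (y \in val e)].
  have [e f|t st] := decomposition_clique td (s := enum xy_edges).
    rewrite !mem_enum !inE => xye xyf ef; apply/L2adjP; split=> //.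
    case/orP: xye => [xe|ye]; case/orP: xyf => [xf|yf];
      [exists x, x | exists x, y | exists y, x | exists y, y];
      by rewrite ?eqxx // ?xy ?orbT // adj_sym xy orbT.
  exists t; apply/andP; split; apply/star_inP => e xye; apply: st;
    by rewrite mem_enum inE xye ?orbT.
- suff : subtree tE (fun t => v \in star_in (B t)) by [].
  apply: subtree_of_paths => // t p tp p_uniq vt vlast.
  apply/allP => u up; apply/star_inP => e ve.
  have /allP := subtree_path tree (connected e) tp p_uniq
    (star_inP _ _ vt e ve) (star_inP _ _ vlast e ve).
  by apply; rewrite inE up orbT.
Qed.

Lemma mu_width_alpha_L2 k :
  has_width_at_most adj (mu adj) k <-> has_width_at_most L2 (alpha L2) k.
Proof.
split=> -[I [tE [B [td width]]]]; exists I, tE.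
  exists (fun t => edges_meeting (B t)); split; first exact: L2_decomposition.
  by move=> t; rewrite alpha_edges_meeting.
exists (fun t => star_in (B t)); split; first exact: decomposition_of_L2.
move=> t; rewrite -alpha_edges_meeting; apply: leq_trans (width t).
exact/alpha_subset/edges_meeting_star_in.
Qed.

End SquareLineGraph.

Lemma lam_twP (W : finType) (adjW : rel W) (lam : {set W} -> nat) :
  is_min_width adjW lam (lam_tw adjW lam).
Proof.
apply: epsilon_spec.
have [m [[wm m_min] _]] := @dec_inh_nat_subset_has_unique_least_element _
  (fun n => classic (has_width_at_most adjW lam n)) (has_width_exists adjW lam).
by exists m; split=> // n /m_min/leP.
Qed.

Lemma eq_lam_tw (W1 W2 : finType) (adj1 : rel W1) (adj2 : rel W2)
    (lam1 : {set W1} -> nat) (lam2 : {set W2} -> nat) :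
  (forall k, has_width_at_most adj1 lam1 k <-> has_width_at_most adj2 lam2 k) ->
  lam_tw adj1 lam1 = lam_tw adj2 lam2.
Proof.
move=> same; have [w1 min1] := lam_twP adj1 lam1; have [w2 min2] := lam_twP adj2 lam2.
by apply/anti_leq/andP; split; [apply: min1; apply/same | apply: min2; apply/same].
Qed.

Theorem mainTheorem5 (V : finType) (adj : rel V) :
  symmetric adj -> irreflexive adj ->
  mu_tw adj = alpha_tw (L2adj adj).
Proof. by move=> adj_sym adj_irr; apply: eq_lam_tw; exact: mu_width_alpha_L2. Qed.
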